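(* Let $n>11$ and suppose $\mathcal{C}\subseteq S_n$ is a perfect single-error-correcting code with respect to the Kendall's $\tau$-distance. Let $r$ be a positive integer with $r<\frac{n}{4}$. Then for every sequence $i_1,i_2,\dots,i_r$ of $r$ distinct elements of $[n]$ and every choice of positions $1\leq j_1<j_2<\dots<j_r\leq n$, the number of codewords $\sigma\in\mathcal{C}$ satisfying $\sigma(j_\ell)=i_\ell$ for all $1\leq \ell\leq r$ is exactly $\frac{(n-r)!}{n}$.
   Context: $S_n$ denotes the set of all permutations of $[n]=\{1,\dots,n\}$, written $\sigma=[\sigma(1),\dots,\sigma(n)]$, where $\sigma(i)$ is the element in position $i$. An adjacent transposition applied to $\sigma$ exchanges the entries in positions $i$ and $i+1$ for some $1\leq i\leq n-1$. The Kendall's $\tau$-distance $d_K(\sigma,\pi)$ is the minimum number of adjacent transpositions needed to transform $\sigma$ into $\pi$. A perfect single-error-correcting code is a subset $\mathcal{C}\subseteq S_n$ such that every permutation of $S_n$ is at distance at most $1$ from exactly one element of $\mathcal{C}$. *)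

From mathcomp Require Import all_boot all_order all_fingroup.
Set Implicit Arguments. Unset Strict Implicit. Unset Printing Implicit Defensive.
Local Open Scope group_scope.

(* Permutations of [n] are modelled as 'S_n = {perm 'I_n}; positions and
   elements are 0-based: sigma p is the element in position p. *)

(* pi is obtained from sigma by one adjacent transposition: exchanging
   the entries in positions i and i+1.  The new permutation is
   p |-> sigma (tperm i (i+1) p), i.e. tperm i (i+1) * sigma in mathcomp's
   left-to-right composition. *)
Definition adj_step (n : nat) (sigma pi : 'S_n) : Prop :=
  exists (i j : 'I_n), j = i.+1 :> nat /\ pi = tperm i j * sigma.

Fixpoint reach (n : nat) (k : nat) (sigma pi : 'S_n) : Prop :=
  match k with
  | 0 => sigma = pi
  | k'.+1 => exists tau : 'S_n, adj_step sigma tau /\ reach k' tau pi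
  end.

Definition kendall_le (n : nat) (sigma pi : 'S_n) (k : nat) : Prop :=
  exists2 m, m <= k & reach m sigma pi.

Definition perfect_1code (n : nat) (C : {set 'S_n}) : Prop :=
  forall pi : 'S_n, exists! c : 'S_n, c \in C /\ kendall_le c pi 1.

(* Counting codewords with prescribed entries at an injective family of
   positions f, the perfect-code property gives, for every such f,
     (n - r)! = sum over the n moves o of the count at the positions f moved by o,
   where the moves are "stay" and the n - 1 adjacent transpositions.  At most
   2r of the moves actually change f.  Comparing this identity at an f of
   maximal count M and at one of minimal count m yields n (M - m) <= 4r (M - m),
   so the count is the same for all f when 4r < n, and the identity then reads
   n * count = (n - r)!. *)
From mathcomp Require Import all_boot all_order all_fingroup.
From mathcomp Require Import primitive_action alt zify.

Set Implicit Arguments.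
Unset Strict Implicit.
Unset Printing Implicit Defensive.

Lemma card_perm_fixing (n r : nat) (f v : 'I_r -> 'I_n) :
  injective f -> injective v ->
  #|[set s : 'S_n | [forall l, s (f l) == v l]]| = (n - r)`!.
Proof.
move=> injf injv.
pose to := (perm_action 'I_n * r)%act.
pose tf := [tuple f l | l < r]; pose tv := [tuple v l | l < r].
have dtf : tf \in r.-dtuple(setT).
  by apply/dtuple_onP; split=> [a b|a]; rewrite ?inE // !tnth_mktuple => /injf.
have dtv : tv \in r.-dtuple(setT).
  by apply/dtuple_onP; split=> [a b|a]; rewrite ?inE // !tnth_mktuple => /injv.
have card_dtuple : #|dtuple_on r [set: 'I_n]| = n ^_ r.
  rewrite -[n in n ^_ r]card_ord -card_uniq_tuples; apply: eq_card => t.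
  by rewrite !inE all_predT; apply/andb_idr => _; apply/subsetP=> x; rewrite inE.
have le_rn : r <= n by rewrite -ffact_gt0 -card_dtuple; apply/card_gt0P; exists tf.
have trans := ntransitive_weak (leq_trans le_rn (eq_leq (esym (card_ord n))))
  (Sym_trans 'I_n).
have [a _ tvE] := atransP2 trans dtf dtv.
have -> : [set s : 'S_n | [forall l, s (f l) == v l]] = amove to (Sym_group 'I_n) tf tv.
  apply/setP => s; rewrite !inE /= eqEtuple.
  by apply/forallP/forallP => H l; move: (H l); rewrite tnth_map !tnth_mktuple.
rewrite tvE amove_act ?inE // card_rcoset.
have := card_orbit_stab to (Sym_group 'I_n) tf.
rewrite (atransP trans tf dtf) card_dtuple card_Sym card_ord -(ffact_fact le_rn).
by move/eqP; rewrite eqn_mul2l -[_ == 0]negbK -lt0n ffact_gt0 le_rn => /eqP.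
Qed.

Lemma card_set_in_sum (T : finType) (A : {set T}) (P : pred T) :
  #|[set x in A | P x]| = \sum_(x in A) P x.
Proof.
rewrite -sum1_card (eq_bigl (fun x => (x \in A) && P x)) => [|x]; last by rewrite !inE.
by rewrite big_mkcondr; apply: eq_bigr => x _; case: (P x).
Qed.

Local Open Scope group_scope.

(* For k = n - 1 the [insubd] falls back to k and [adjt k] is the identity;
   [adj_moves] excludes that index. *)
Definition adjt {n : nat} (k : 'I_n) : 'S_n := tperm k (insubd k k.+1).

(* [None] is the trivial move, [Some k] exchanges positions k and k + 1. *)
Definition adj_moves (n : nat) : {set option 'I_n} :=
  [set o : option 'I_n | if o is Some k then k.+1 < n else true].

Definition neighbour {n : nat} (c : 'S_n) (o : option 'I_n) : 'S_n :=
  if o is Some k then adjt k * c else c.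

Definition shift_pos {n r : nat} (o : option 'I_n) (f : {ffun 'I_r -> 'I_n}) :
  {ffun 'I_r -> 'I_n} :=
  [ffun l => if o is Some k then adjt k (f l) else f l].

Definition code_fixing {n r : nat} (C : {set 'S_n}) (i f : 'I_r -> 'I_n) : nat :=
  #|[set s in C | [forall l, s (f l) == i l]]|.

Lemma adjtL {n : nat} (k : 'I_n) : k.+1 < n -> val (adjt k k) = k.+1.
Proof. by move=> lt_kn; rewrite /adjt tpermL val_insubd lt_kn. Qed.

Lemma kendall_le1P (n : nat) (c p : 'S_n) :
  kendall_le c p 1 <-> exists2 o, o \in adj_moves n & p = neighbour c o.
Proof.
split.
- case=> [[_ /= ->|[|//]]]; first by exists None; rewrite ?inE.
  move=> _ /= [t [[k [k' [k'E ->]]] <-]].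
  exists (Some k); first by rewrite inE -k'E ltn_ord.
  by rewrite /neighbour /adjt; congr (tperm _ _ * _); apply: val_inj;
    rewrite val_insubd -k'E ltn_ord.
- case=> [[k|]] /[!inE] lt_kn ->; last by exists 0%N.
  exists 1%N => //; exists (adjt k * c); split=> //.
  by exists k, (insubd k k.+1); rewrite val_insubd lt_kn.
Qed.

Lemma neighbour_inj (n : nat) (c : 'S_n) : {in adj_moves n &, injective (neighbour c)}.
Proof.
have adjt_neq1 (k : 'I_n) : k.+1 < n -> adjt k != 1.
  by move=> lt_kn; apply/eqP => e; have := adjtL lt_kn; rewrite e perm1 /=; lia.
case=> [k|] [k'|] /[!inE] /= lt_kn lt_k'n //.
- move/mulIg => e; have := adjtL lt_kn; rewrite e /adjt.
  case: tpermP => [-> //| /(congr1 val) | _ _]; rewrite /= ?val_insubd ?lt_k'n /=; lia.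
- by rewrite -{2}(mul1g c) => /mulIg /eqP; rewrite (negPf (adjt_neq1 _ lt_kn)).
- by rewrite -{1}(mul1g c) => /mulIg /esym /eqP; rewrite (negPf (adjt_neq1 _ lt_k'n)).
Qed.

Lemma card_adj_moves (n : nat) : 0 < n -> #|adj_moves n| = n.
Proof.
case: n => [//|n] _.
have -> : adj_moves n.+1 = None |: (Some @: [set~ ord_max]).
  apply/setP => -[k|]; rewrite !inE //= (mem_imset _ _ (@Some_inj _)) !inE.
  by rewrite -val_eqE /= ltnS ltn_neqAle -ltnS ltn_ord andbT.
rewrite cardsU1 card_imset ?cardsC1 ?card_ord; last exact: Some_inj.
by have /negPf -> : None \notin Some @: [set~ (@ord_max n)] by apply/imsetP => -[].
Qed.

Local Close Scope group_scope.

(* Double counting the pairs (c, p) with c in C and p in Y at distance <= 1. *)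
Lemma perfect_code_sum (n : nat) (C Y : {set 'S_n}) : perfect_1code C ->
  #|Y| = \sum_(o in adj_moves n) #|[set c in C | neighbour c o \in Y]|.
Proof.
move=> codeC.
have one_center p : #|[set c in C | p \in neighbour c @: adj_moves n]| = 1.
  have [c0 [[c0C c0p] c0_uniq]] := codeC p.
  rewrite -(cards1 c0); apply: eq_card => c; rewrite !inE.
  apply/andP/eqP => [[cC /imsetP[o oD pE]] | ->].
    by apply/esym/c0_uniq; split=> //; apply/kendall_le1P; exists o.
  by have [o oD ->] := (kendall_le1P _ _).1 c0p; rewrite c0C imset_f.
rewrite -sum1_card.
under eq_bigr => p _ do rewrite -(one_center p) card_set_in_sum.
rewrite exchange_big /=.
under [RHS]eq_bigr => o _ do rewrite card_set_in_sum.
rewrite [RHS]exchange_big /=; apply: eq_bigr => c _.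
rewrite -(big_imset (fun p => (p \in Y) : nat) (@neighbour_inj n c)) /=.
by rewrite -!card_set_in_sum; apply: eq_card => p; rewrite !inE andbC.
Qed.

Lemma code_fixing_sum (n r : nat) (C : {set 'S_n}) (i : 'I_r -> 'I_n)
    (f : {ffun 'I_r -> 'I_n}) :
  perfect_1code C -> injective i -> injective f ->
  (n - r)`! = \sum_(o in adj_moves n) code_fixing C i (shift_pos o f).
Proof.
move=> codeC inj_i inj_f.
rewrite -(card_perm_fixing inj_f inj_i) (perfect_code_sum _ codeC).
apply: eq_bigr => o _; apply: eq_card => c; rewrite !inE; congr (_ && _).
by apply: eq_forallb => l; rewrite ffunE; case: o => [k|] //=; rewrite permM.
Qed.

Lemma shift_pos_inj (n r : nat) (o : option 'I_n) (f : {ffun 'I_r -> 'I_n}) :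
  injective f -> injective (shift_pos o f).
Proof. by move=> inj_f a b; rewrite !ffunE; case: o => [k /perm_inj|]; apply: inj_f. Qed.

(* Only the transpositions touching an entry of f, at most two per entry,
   move f. *)
Lemma card_moves_shifting (n r : nat) (f : {ffun 'I_r -> 'I_n}) :
  #|[set o in adj_moves n | shift_pos o f != f]| <= r + r.
Proof.
pose A := [set Some (f l) | l : 'I_r].
pose B := [set Some (insubd (f l) (f l).-1) | l : 'I_r].
have sub : [set o in adj_moves n | shift_pos o f != f] \subset A :|: B.
  apply/subsetP => -[k|]; rewrite !inE => /andP[lt_kn]; last first.
    suff -> : shift_pos None f = f by rewrite eqxx.
    by apply/ffunP => l; rewrite ffunE.
  move=> moved; have [l] : exists l, shift_pos (Some k) f l != f l.
    apply/existsP; apply: contraR moved => /existsPn unmoved.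
    by apply/eqP/ffunP => l; apply/eqP/negPn/unmoved.
  rewrite ffunE /adjt; case: tpermP => [fl _|fl _|_ _]; last by rewrite eqxx.
    by apply/orP; left; rewrite -fl imset_f.
  apply/orP; right; apply/imsetP; exists l => //; congr Some; apply: val_inj.
  by rewrite val_insubd fl val_insubd lt_kn /= (ltn_trans (ltnSn k) lt_kn).
apply: leq_trans (subset_leq_card sub) (leq_trans (leq_card_setU _ _) _).
by apply: leq_add; apply: leq_trans (leq_imset_card _ _) _; rewrite ?cardsT card_ord.
Qed.

Section ConstantAverage.

Variables (T X : finType) (D : {set T}) (P : pred X) (g : T -> X -> X).
Variables (A : X -> nat) (K d : nat).
Hypothesis gP : forall o f, P f -> P (g o f).
Hypothesis sum_g : forall f, P f -> \sum_(o in D) A (g o f) = K.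
Hypothesis few_moved : forall f, P f -> #|[set o in D | g o f != f]| <= d.
Hypothesis many_moves : d + d < #|D|.

Lemma sum_moved_le f c : P f -> \sum_(o in D) (if g o f != f then c else 0) <= d * c.
Proof.
move=> Pf; rewrite -big_mkcondr /=.
rewrite (eq_bigl (mem [set o in D | g o f != f])) => [|o]; last by rewrite !inE.
by rewrite sum_nat_const leq_mul2r few_moved ?orbT.
Qed.

Lemma constant_of_averages f h : P f -> P h -> A f = A h.
Proof.
move=> Pf Ph.
have [fM PfM maxM] := @arg_maxnP _ f P A Pf.
have [fm Pfm minm] := @arg_minnP _ f P A Pf.
have upper : #|D| * A fM <= K + d * (A fM - A fm).
  rewrite -(sum_g PfM) -sum_nat_const.
  apply: leq_trans (leq_add (leqnn _) (sum_moved_le (A fM - A fm) PfM)).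
  rewrite -big_split /=; apply: leq_sum => o _.
  have := minm _ (gP o PfM); case: ifP => [_|/negbFE/eqP ->]; lia.
have lower : K <= #|D| * A fm + d * (A fM - A fm).
  rewrite -(sum_g Pfm) -sum_nat_const.
  apply: leq_trans (leq_add (leqnn _) (sum_moved_le (A fM - A fm) Pfm)).
  rewrite -big_split /=; apply: leq_sum => o _.
  have := maxM _ (gP o Pfm); case: ifP => [_|/negbFE/eqP ->]; lia.
have : #|D| * (A fM - A fm) <= (d + d) * (A fM - A fm).
  rewrite mulnBr mulnDl leq_subLR addnA (leq_trans upper) //.
  by rewrite leq_add2r.
rewrite leq_mul2r leqNgt many_moves orbF => /eqP gap0.
by have := maxM _ Pf; have := maxM _ Ph; have := minm _ Pf; have := minm _ Ph; lia.
Qed.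

End ConstantAverage.

Theorem theorem3 (n : nat) (C : {set 'S_n}) (r : nat)
    (i : 'I_r -> 'I_n) (j : 'I_r -> 'I_n) :
  11 < n -> perfect_1code C -> 0 < r -> 4 * r < n ->
  injective i -> (forall a b : 'I_r, a < b -> j a < j b) ->
  #|[set s in C | [forall l : 'I_r, s (j l) == i l]]| * n = (n - r)`!.
Proof.
move=> _ codeC _ lt_4r_n inj_i j_incr.
have inj_j : injective j.
  move=> a b jab; case: (ltngtP a b) => [/j_incr|/j_incr|/val_inj //];
    by rewrite jab ltnn.
pose P := [pred f : {ffun 'I_r -> 'I_n} | injectiveb f].
pose count (f : {ffun 'I_r -> 'I_n}) := code_fixing C i f.
have Pj : P (finfun j) by apply/injectiveP => a b; rewrite !ffunE => /inj_j.
have P_shift o f : P f -> P (shift_pos o f).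
  by move=> /injectiveP inj_f; apply/injectiveP/shift_pos_inj.
have card_moves : #|adj_moves n| = n by apply: card_adj_moves; lia.
have constant f : P f -> code_fixing C i f = code_fixing C i (finfun j).
  move=> Pf; apply: (constant_of_averages (A := count) (K := (n - r)`!) P_shift _
    (fun f _ => card_moves_shifting f) _ Pf Pj).
  - by move=> g /injectiveP inj_g; rewrite (code_fixing_sum codeC inj_i inj_g).
  - by rewrite card_moves; lia.
rewrite (code_fixing_sum codeC inj_i (injectiveP _ Pj)).
under eq_bigr => o _ do rewrite constant ?P_shift //.
rewrite sum_nat_const card_moves mulnC; congr (_ * _); apply: eq_card => s.
by rewrite !inE; under eq_forallb => l do rewrite ffunE.
Qed.
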